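(* For every integer $n>1$, $$E_n=\sum_{N=1}^{\lfloor n/2\rfloor}(-1)^N\sum_{\substack{1\le q_1,\dots,q_{2N-1}\le\lfloor n/2\rfloor\\ (2q_1-1)+\cdots+(2q_{2N-1}-1)=n-1}}\frac{(n-1)!}{(2q_1-1)!\cdots(2q_{2N-1}-1)!}.$$
   Context: The Euler numbers $E_n$ are defined by $\sum_{n\ge0}E_nz^n/n!=1/\cosh z$ (so $E_n=0$ for odd $n$). The inner sum is over ordered $(2N-1)$-tuples. *)

From mathcomp Require Import all_boot all_algebra.
Import GRing.Theory.
Local Open Scope ring_scope.

Definition cosh_coef (k : nat) : rat := if odd k then 0 else (k`!%:R)^-1.

(* E is the sequence of Euler numbers: as formal power series,
   (sum_n E n z^n / n!) * cosh z = 1, i.e. sum_n E n z^n/n! = 1/cosh z.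
   (This identity determines E uniquely.) *)
Definition is_euler_seq (E : nat -> rat) : Prop :=
  forall n : nat,
    \sum_(k < n.+1) cosh_coef k * (E (n - k)%N / ((n - k)`!)%:R)
    = (n == 0%N)%:R.

(* Differentiating cosh z * F(z) = 1, with F the exponential generating function
   of the Euler numbers, and using cosh^2 = 1 + sinh^2 gives
   F' = - sinh / (1 + sinh^2) = sum_(N >= 1) (-1)^N sinh^(2N-1).
   Reading off the coefficient of z^(n-1) and expanding each power of sinh by the
   multinomial formula yields the claimed sum.  Since sinh has valuation 1, all
   series can be truncated to polynomials: only terms with N <= n/2 and odd
   exponents below n contribute to z^(n-1). *)

From mathcomp Require Import all_boot all_algebra zify.
Import GRing.Theory Num.Theory.
Local Open Scope ring_scope.

Section TruncatedEquality.
Set Implicit Arguments.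
Unset Strict Implicit.
Context {R : comNzRingType}.
Implicit Types p q r : {poly R}.

Definition eq_upto (k : nat) (p q : {poly R}) := forall i, (i < k)%N -> p`_i = q`_i.

Lemma eq_upto_sym k p q : eq_upto k p q -> eq_upto k q p.
Proof. by move=> h i hi; rewrite h. Qed.

Lemma eq_upto_trans k p q r : eq_upto k p q -> eq_upto k q r -> eq_upto k p r.
Proof. by move=> h1 h2 i hi; rewrite h1 ?h2. Qed.

Lemma eq_upto_le k l p q : (l <= k)%N -> eq_upto k p q -> eq_upto l p q.
Proof. by move=> hl h i hi; apply: h; apply: leq_trans hl. Qed.

Lemma eq_uptoMl k r p q : eq_upto k p q -> eq_upto k (r * p) (r * q).
Proof.
move=> h i hi; rewrite !coefM; apply: eq_bigr => j _; rewrite h //.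
exact: leq_ltn_trans (leq_subr _ _) hi.
Qed.

Lemma eq_uptoMr k r p q : eq_upto k p q -> eq_upto k (p * r) (q * r).
Proof. by move=> h; rewrite ![_ * r]mulrC; apply: eq_uptoMl. Qed.

Lemma eq_upto_deriv k p q : eq_upto k.+1 p q -> eq_upto k p^`() q^`().
Proof. by move=> h i hi; rewrite !coef_deriv h. Qed.

Lemma eq_upto_expr0 k p : p`_0 = 0 -> eq_upto k (p ^+ k) 0.
Proof.
move=> p0; elim: k => [//|k IH] i hi.
rewrite exprS coefM coef0 big1 // => -[[|j] hj] _ /=; first by rewrite p0 mul0r.
by rewrite IH ?coef0 ?mulr0 //; lia.
Qed.

Lemma eq_upto_mulIr k q (p1 p2 : {poly R}) :
  q`_0 = 1 -> eq_upto k (p1 * q) (p2 * q) -> eq_upto k p1 p2.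
Proof.
move=> q01 h.
suff h0 : eq_upto k (p1 - p2) 0.
  by move=> i /h0; rewrite coefB coef0 => /eqP; rewrite subr_eq0 => /eqP.
have {}h : eq_upto k ((p1 - p2) * q) 0.
  by move=> i hi; rewrite mulrBl coefB h // subrr coef0.
elim/ltn_ind => i IH hi; rewrite coef0.
have := h i hi; rewrite coefM big_ord_recr /= subnn q01 mulr1 coef0.
rewrite big1 ?add0r // => j _.
by rewrite IH ?coef0 ?mul0r //; apply: ltn_trans (ltn_ord j) hi.
Qed.

Lemma coef_expr_sum_monomials m d (c : 'I_d -> R) (g : 'I_d -> nat) i :
  ((\sum_(j < d) c j *: 'X^(g j)) ^+ m)`_i =
  \sum_(f : {ffun 'I_m -> 'I_d} | (\sum_l g (f l) == i)%N) \prod_l c (f l).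
Proof.
rewrite -[in LHS](card_ord m) -prodr_const bigA_distr_bigA coef_sum.
rewrite [RHS]big_mkcond; apply: eq_bigr => f _.
rewrite scaler_prod prodrXr coefZ coefXn eq_sym.
by case: eqP; rewrite ?mulr1 ?mulr0.
Qed.

Lemma sum_alt_odd_exprM (x : R) m :
  (\sum_(1 <= N < m.+1) (-1) ^+ N * x ^+ (2 * N).-1) * (1 + x * x) =
  - x - (-1) ^+ m.+1 * x ^+ (2 * m.+1).-1.
Proof.
pose a N := (-1) ^+ N * x ^+ (2 * N).-1.
rewrite mulr_suml (telescope_sumr_eq (fun N => - a N)) //.
  by rewrite /a expr1 mulN1r opprK addrC.
move=> N /andP[N_gt0 _]; rewrite /a opprK addrC mulrDr mulr1.
have -> : ((2 * N.+1).-1 = ((2 * N).-1).+2)%N by lia.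
by rewrite exprS mulN1r mulNr opprK !exprSr !mulrA.
Qed.

End TruncatedEquality.

Lemma eq_upto_deriv0 (R : numDomainType) k (p : {poly R}) :
  eq_upto k p^`() 0 -> eq_upto k.+1 p (p`_0)%:P.
Proof.
move=> h [|i] hi; first by rewrite coefC.
have := h i hi; rewrite coef_deriv coef0 coefC /= => /eqP.
by rewrite mulrn_eq0 /= => /eqP.
Qed.

Lemma mulrn_invf_factS (R : numFieldType) j :
  ((j.+1)`!%:R : R)^-1 *+ j.+1 = (j`!%:R)^-1.
Proof.
rewrite factS natrM invfM -[_ *+ j.+1]mulr_natr mulrAC mulVf ?mul1r //.
by rewrite pnatr_eq0.
Qed.

Section EulerSeries.
Set Implicit Arguments.
Unset Strict Implicit.

Definition sinh_poly (d : nat) : {poly rat} :=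
  \sum_(j < d) ((2 * j + 1)`!%:R)^-1 *: 'X^(2 * j + 1).

Definition cosh_poly (n : nat) : {poly rat} := \poly_(k < n) cosh_coef k.

Definition egf_poly (E : nat -> rat) (n : nat) : {poly rat} :=
  \poly_(k < n) (E k / k`!%:R).

Lemma coef_sinh_poly d i : (i < 2 * d + 1)%N ->
  (sinh_poly d)`_i = if odd i then (i`!%:R)^-1 else 0.
Proof.
move=> hi; rewrite coef_sum.
have := odd_double_half i; rewrite -mul2n.
move: (i./2) => h; case: (odd i) => /= hh.
  have hd : (h < d)%N by lia.
  rewrite (bigD1 (Ordinal hd)) //= big1 ?addr0.
    by rewrite coefZ coefXn -hh addnC eqxx mulr1.
  move=> j hj; rewrite coefZ coefXn.
  case: eqP => [e|]; last by rewrite mulr0.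
  by case/eqP: hj; apply: val_inj => /=; lia.
rewrite big1 // => j _; rewrite coefZ coefXn.
by case: eqP => [e|]; [lia | rewrite mulr0].
Qed.

Lemma sinh_poly0 d : (sinh_poly d)`_0 = 0.
Proof. by rewrite coef_sinh_poly //; lia. Qed.

Lemma deriv_cosh_poly n d : (n <= 2 * d + 1)%N ->
  eq_upto n (cosh_poly n.+1)^`() (sinh_poly d).
Proof.
move=> hnd j hj; rewrite coef_deriv coef_poly ltnS hj coef_sinh_poly; last by lia.
rewrite /cosh_coef /=.
by case: (odd j); rewrite /= ?mulrn_invf_factS ?mul0rn.
Qed.

Lemma deriv_sinh_poly n d : (n <= 2 * d + 1)%N ->
  eq_upto n.-1 (sinh_poly d)^`() (cosh_poly n.+1).
Proof.
move=> hnd j hj; rewrite coef_deriv coef_poly ifT; last by lia.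
rewrite coef_sinh_poly; last by lia.
rewrite /cosh_coef /=.
by case: (odd j); rewrite /= ?mulrn_invf_factS ?mul0rn.
Qed.

Lemma cosh_poly_sqr n d : (0 < n)%N -> (n <= 2 * d + 1)%N ->
  eq_upto n (cosh_poly n.+1 * cosh_poly n.+1) (1 + sinh_poly d * sinh_poly d).
Proof.
move=> n_gt0 hnd; set C := cosh_poly n.+1; set S := sinh_poly d.
have dC := deriv_cosh_poly hnd; have dS := deriv_sinh_poly hnd.
have dCS : eq_upto n.-1 (C * C - S * S)^`() 0.
  move=> i hi; have hi' : (i < n)%N by lia.
  rewrite derivB !derivM !coefB !coefD (eq_uptoMr C dC) ?(eq_uptoMl C dC) //.
  by rewrite (eq_uptoMr S dS) ?(eq_uptoMl S dS) // (mulrC S C) coef0 subrr.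
have := eq_upto_deriv0 dCS; rewrite prednK // => CS_const i hi.
apply/eqP; rewrite coefD -subr_eq -coefB CS_const //.
rewrite coef1 coefC coefB !coef0M sinh_poly0 coef_poly /= /cosh_coef /= invr1.
by case: (i == 0)%N; rewrite /= ?mulr1 ?mul0r ?subr0.
Qed.

Lemma cosh_egf_poly E n : is_euler_seq E ->
  eq_upto n.+1 (cosh_poly n.+1 * egf_poly E n.+1) 1.
Proof.
move=> hE m hm; rewrite coefM coef1 -(hE m); apply: eq_bigr => -[j hj] _ /=.
by rewrite !coef_poly !ifT //; lia.
Qed.

(* Differentiating cosh * F = 1 gives cosh * F' = - sinh * F, hence cosh^2 * F' = - sinh. *)
Lemma deriv_egf_poly E n d : is_euler_seq E -> (0 < n)%N -> (n <= 2 * d + 1)%N ->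
  eq_upto n ((egf_poly E n.+1)^`() * (1 + sinh_poly d * sinh_poly d)) (- sinh_poly d).
Proof.
move=> hE n_gt0 hnd; set C := cosh_poly n.+1; set S := sinh_poly d.
set F := egf_poly E n.+1.
have CF := @cosh_egf_poly E n hE.
have CF' : eq_upto n (C * F^`()) (- (S * F)).
  move=> i hi; apply: (addrI (C^`() * F)`_i).
  rewrite -coefD -derivM (eq_upto_deriv CF) // -polyC1 derivC coef0.
  by rewrite (eq_uptoMr F (deriv_cosh_poly hnd)) // coefN subrr.
apply: eq_upto_trans (eq_uptoMl _ (eq_upto_sym (cosh_poly_sqr n_gt0 hnd))) _.
move=> i hi; rewrite mulrC -mulrA (eq_uptoMl C CF') // mulrN mulrA (mulrC C S).
by rewrite -mulrA coefN (eq_uptoMl S (eq_upto_le (leqnSn n) CF)) // mulr1 coefN.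
Qed.

Lemma deriv_egf_poly_alt_sum E n : is_euler_seq E -> (1 < n)%N ->
  eq_upto n (egf_poly E n.+1)^`()
    (\sum_(1 <= N < (n./2).+1) (-1) ^+ N * sinh_poly n./2 ^+ (2 * N).-1).
Proof.
move=> hE hn; set d := n./2; set S := sinh_poly d.
have hnd : (n <= 2 * d + 1)%N.
  by have := odd_double_half n; rewrite -/d -mul2n; case: (odd n) => /=; lia.
apply: (@eq_upto_mulIr _ _ (1 + S * S)).
  by rewrite coefD coef1 coef0M sinh_poly0 mul0r addr0.
apply: eq_upto_trans (deriv_egf_poly hE _ hnd) _; first by lia.
rewrite sum_alt_odd_exprM => i hi.
rewrite coefB -polyCN -rmorphXn coefCM (eq_upto_expr0 (sinh_poly0 d)); last by lia.
by rewrite coef0 mulr0 subr0.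
Qed.

Lemma coef_deriv_egf_poly E n m : (m < n)%N ->
  (egf_poly E n.+1)^`()`_m = E m.+1 / m`!%:R.
Proof.
move=> hm; rewrite coef_deriv coef_poly ifT; last by lia.
rewrite factS natrM invfM -[_ *+ _]mulr_natr -mulrA mulrAC mulVf ?mul1r //.
by rewrite pnatr_eq0.
Qed.

End EulerSeries.

Theorem proposition1 (E : nat -> rat) (hE : is_euler_seq E)
    (n : nat) (hn : (1 < n)%N) :
  E n =
  \sum_(1 <= N < (n./2).+1)
    (-1) ^+ N *
    \sum_(q : {ffun 'I_((2 * N).-1) -> 'I_(n./2)}
            | (\sum_i (2 * q i + 1) == n.-1)%N)
      ((n.-1)`!%:R / (\prod_i (2 * q i + 1)`!)%:R).
Proof.
have hn1 : (n.-1 < n)%N by lia.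
have := deriv_egf_poly_alt_sum hE hn hn1.
rewrite coef_deriv_egf_poly // prednK; last by lia.
rewrite coef_sum => /(congr1 (fun x => (n.-1)`!%:R * x)).
rewrite mulrC divfK ?pnatr_eq0 -?lt0n ?fact_gt0 // => ->.
rewrite mulr_sumr; apply: eq_bigr => N _.
rewrite -polyCN -rmorphXn coefCM mulrCA; congr (_ * _).
rewrite coef_expr_sum_monomials mulr_sumr; apply: eq_bigr => q _.
by rewrite natr_prod -prodfV.
Qed.
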